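(* For a polynomial $p(x,y)=\sum_{i,j\ge0}a_{i,j}x^iy^j$ and an integer $n\ge0$ define $I_n(p)=\sum_{i=0}^{n}\sum_{j=0}^{n-i}(-1)^j\binom{n-i}{j}a_{i,j}$. Then for all integers $n,k\ge 0$, $$I_n\big(((x-1)(y-1))^k\big)=1.$$ *)

(* Bivariate polynomials over int are represented as
   {poly {poly int}}: the outer variable is x, the inner (coefficient)
   variable is y, so a_{i,j} = (p`_i)`_j is the coefficient of x^i y^j. *)
From mathcomp Require Import all_boot all_algebra.
Set Implicit Arguments. Unset Strict Implicit. Unset Printing Implicit Defensive.
Import GRing.Theory.
Local Open Scope ring_scope.

Definition bicoef (p : {poly {poly int}}) (i j : nat) : int := (p`_i)`_j.

Definition varx : {poly {poly int}} := 'X.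
Definition vary : {poly {poly int}} := ('X)%:P.

Definition In (n : nat) (p : {poly {poly int}}) : int :=
  \sum_(i < n.+1) \sum_(j < (n - i).+1)
     (-1) ^+ j * ('C(n - i, j))%:R * bicoef p i j.

(* The inner sum of I_n, applied to the y-polynomial r = a_{i,.}, is
   J_m(r) = sum_j (-1)^j C(m,j) r_j = coefficient of y^m in (y-1)^m r(y),
   with m = n - i.  In this form, multiplying r by (y-1) turns J_m into a
   consecutive-coefficient difference, so J_m((y-1)r) - J_{m+1}((y-1)r) = J_{m+1}(r).
   Multiplying p by (x-1) shifts the x-degree by one, and the two effects
   telescope: I_n((x-1)(y-1)p) = I_n(p). *)
From mathcomp Require Import all_boot all_algebra.
Set Implicit Arguments. Unset Strict Implicit. Unset Printing Implicit Defensive.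
Import GRing.Theory.
Local Open Scope ring_scope.

Section AltBinom.

Variable R : comNzRingType.
Implicit Types (r : {poly R}) (m : nat).

Lemma coef_exp_Xsub1 m j : (j <= m)%N ->
  (('X - 1 : {poly R}) ^+ m)`_(m - j) = (-1) ^+ j * 'C(m, j)%:R.
Proof.
move=> le_jm; rewrite exprBn coef_sum.
rewrite (bigD1 (Ordinal (leq_ltn_trans le_jm (ltnSn m)))) //=.
rewrite big1 ?addr0 => [|i neq_ij];
  rewrite expr1n mulr1 coefMn -polyCN -polyC_exp coefCM coefXn.
  by rewrite eqxx mulr1 mulr_natr.
have /negbTE neq_ji : (j != i :> nat) by rewrite eq_sym.
by rewrite eqn_sub2lE ?(leq_ord i) // neq_ji mulr0 mul0rn.
Qed.

Definition alt_binom m r : R := ((('X - 1) ^+ m) * r)`_m.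

Lemma alt_binomE m r :
  alt_binom m r = \sum_(j < m.+1) (-1) ^+ j * 'C(m, j)%:R * r`_j.
Proof.
rewrite /alt_binom coefMr; apply: eq_bigr => j _.
by rewrite coef_exp_Xsub1 // -ltnS.
Qed.

Lemma alt_binomB m r1 r2 :
  alt_binom m (r1 - r2) = alt_binom m r1 - alt_binom m r2.
Proof. by rewrite /alt_binom mulrBr coefB. Qed.

Lemma alt_binom0r m : alt_binom m 0 = 0.
Proof. by rewrite /alt_binom mulr0 coef0. Qed.

Lemma alt_binom1 m : alt_binom m 1 = 1.
Proof.
rewrite alt_binomE big_ord_recl coef1 bin0 !mulr1.
by rewrite big1 ?addr0 // => j _; rewrite coef1 mulr0.
Qed.

Lemma alt_binom0_mulXsub1 r : alt_binom 0 (('X - 1) * r) = - alt_binom 0 r.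
Proof. by rewrite /alt_binom !expr0 !mul1r mulrBl mul1r coefB coefXM sub0r. Qed.

Lemma alt_binom_telescope m r :
  alt_binom m (('X - 1) * r) - alt_binom m.+1 (('X - 1) * r) = alt_binom m.+1 r.
Proof.
rewrite /alt_binom !mulrA -!exprSr [_ ^+ m.+2]exprS -mulrA.
by rewrite mulrBl mul1r coefB coefXM /= opprB addrC subrK.
Qed.

End AltBinom.

Lemma In_alt_binom n p : In n p = \sum_(i < n.+1) alt_binom (n - i) p`_i.
Proof. by apply: eq_bigr => i _; rewrite alt_binomE. Qed.

Lemma In1 n : In n 1 = 1.
Proof.
rewrite In_alt_binom big_ord_recl subn0 coef1 alt_binom1.
by rewrite big1 ?addr0 // => i _; rewrite coef1 alt_binom0r.
Qed.

Lemma In_mulXsub1Ysub1 n p : In n ((varx - 1) * (vary - 1) * p) = In n p.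
Proof.
set q := (vary - 1) * p.
have coef_q i : q`_i = ('X - 1) * p`_i by rewrite /q /vary -polyCB coefCM.
have coef_xq i : ((varx - 1) * q)`_i =
    (if i is i'.+1 then q`_i' else 0) - q`_i.
  by rewrite mulrBl mul1r coefB coefXM; case: i.
rewrite -mulrA !In_alt_binom.
under eq_bigr do rewrite coef_xq alt_binomB.
rewrite sumrB big_ord_recl alt_binom0r add0r.
rewrite [X in _ - X]big_ord_recr [RHS]big_ord_recr /= subnn.
rewrite opprD addrA coef_q alt_binom0_mulXsub1 opprK; congr (_ + _).
(* The x-shift pairs term i of the first sum with term i+1 of the second. *)
rewrite -sumrB; apply: eq_bigr => i _.
rewrite /bump /= add1n !coef_q.
have -> : (n - i = (n - i.+1).+1)%N by rewrite subnS prednK // subn_gt0.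
exact: alt_binom_telescope.
Qed.

Theorem lemma3p3 (n k : nat) :
  In n (((varx - 1) * (vary - 1)) ^+ k) = 1.
Proof.
elim: k => [|k IHk]; first exact: In1.
by rewrite exprS In_mulXsub1Ysub1.
Qed.
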